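(* Let $m$ be an even positive integer. The right cosets $\Gamma_0(2)^+\gamma$ for $\gamma\in M^m$ are pairwise distinct.
   Context: Matrices are elements of $GL_2^+(\mathbb{R})$ considered up to sign. $\Gamma_0(2)=\{\begin{bmatrix}a&b\\c&d\end{bmatrix}\in SL_2(\mathbb{Z}): c\equiv0\pmod 2\}$, $w_2=2^{-1/2}\begin{bmatrix}0&-1\\2&0\end{bmatrix}$, $\Gamma_0(2)^+$ is the group generated by $\Gamma_0(2)$ and $w_2$. With integers $x,z>0$, $y$: $M_1^m=\{\begin{bmatrix}x&y\\0&z\end{bmatrix}: xz=m,\ 0\leq y<z,\ \gcd(x,y,z)=1,\ x\text{ odd}\}$, $S_1^m=\{\begin{bmatrix}x&y\\0&z\end{bmatrix}: xz=m,\ 0\leq y<z,\ \gcd(x,y,z)=1,\ z\text{ odd}\}$, $S_2^m=\{2^{-1/2}\begin{bmatrix}x&y\\0&z\end{bmatrix}: xz=2m,\ 0\leq y<z,\ \gcd(x,y,z)=1,\ x,z\text{ even}\}$, $M^m=M_1^m\cup S_1^m\cup S_2^m$. *)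

From HB Require Import structures.
From mathcomp Require Import all_boot all_order all_algebra.
From mathcomp Require Import reals.
Set Implicit Arguments. Unset Strict Implicit. Unset Printing Implicit Defensive.
Import Order.TTheory GRing.Theory Num.Theory.
Local Open Scope ring_scope.

Definition mx2 {R : realType} (a b c d : R) : 'M[R]_2 :=
  \matrix_(i < 2, j < 2)
    if (i == 0 :> nat) then (if (j == 0 :> nat) then a else b)
    else (if (j == 0 :> nat) then c else d).

Definition Gamma0_2 {R : realType} (A : 'M[R]_2) : Prop :=
  exists a b c d : int,
    A = mx2 a%:~R b%:~R c%:~R d%:~R /\ a * d - b * c = 1 /\ (2 %| c)%Z.

Definition w2 {R : realType} : 'M[R]_2 := (Num.sqrt (2 : R))^-1 *: mx2 0 (-1) 2 0.

Inductive Gamma0_2_plus {R : realType} : 'M[R]_2 -> Prop :=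
  | G2p_base A : Gamma0_2 A -> Gamma0_2_plus A
  | G2p_w2 : Gamma0_2_plus w2
  | G2p_mul A B : Gamma0_2_plus A -> Gamma0_2_plus B -> Gamma0_2_plus (A *m B)
  | G2p_inv A : Gamma0_2_plus A -> Gamma0_2_plus (invmx A).

(* right coset Gamma_0(2)^+ g in GL_2^+(R) modulo sign: the set of
   (representatives of) elements +- h g with h in Gamma_0(2)^+ *)
Definition right_coset {R : realType} (g : 'M[R]_2) : 'M[R]_2 -> Prop :=
  fun A => exists h, Gamma0_2_plus h /\ (A = h *m g \/ A = - (h *m g)).

Definition upper_cond (m : nat) (x y z : int) : Prop :=
  0 < x /\ 0 < z /\ 0 <= y < z /\ gcdz x (gcdz y z) = 1.

Definition M1 {R : realType} (m : nat) (g : 'M[R]_2) : Prop :=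
  exists x y z : int, upper_cond m x y z /\ x * z = m%:Z /\ odd `|x|%N /\
    g = mx2 x%:~R y%:~R 0 z%:~R.

Definition S1 {R : realType} (m : nat) (g : 'M[R]_2) : Prop :=
  exists x y z : int, upper_cond m x y z /\ x * z = m%:Z /\ odd `|z|%N /\
    g = mx2 x%:~R y%:~R 0 z%:~R.

Definition S2 {R : realType} (m : nat) (g : 'M[R]_2) : Prop :=
  exists x y z : int, upper_cond m x y z /\ x * z = (2 * m)%:Z /\
    ~~ odd `|x|%N /\ ~~ odd `|z|%N /\
    g = (Num.sqrt (2 : R))^-1 *: mx2 x%:~R y%:~R 0 z%:~R.

Definition Mset {R : realType} (m : nat) (g : 'M[R]_2) : Prop :=
  M1 m g \/ S1 m g \/ S2 m g.

From HB Require Import structures.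
From mathcomp Require Import all_boot all_order all_algebra.
From mathcomp Require Import reals.
From mathcomp Require Import ring zify.
Set Implicit Arguments. Unset Strict Implicit. Unset Printing Implicit Defensive.
Import Order.TTheory GRing.Theory Num.Theory.
Local Open Scope ring_scope.

(* Gamma_0(2)^+ is the union of Gamma_0(2), the integral matrices [[a,b],[2c,d]]
   of determinant 1, and of the coset Gamma_0(2) w_2, whose elements are the
   matrices 2^(-1/2) [[2a,b],[2c,2d]] of determinant 1.  Every g in M^m is
   k [[x,y],[0,z]] with 0 < x, 0 <= y < z and either k = 1, or k = 2^(-1/2)
   and y odd (x and z are then even and gcd(x,y,z) = 1).
   Since -1 lies in Gamma_0(2), equal cosets give g1 = h g2 with h in
   Gamma_0(2)^+ upper triangular with positive diagonal.  Such an h cannot lie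
   in Gamma_0(2) w_2 (its determinant would be 2ad = 1), so h = [[1,b],[0,1]].
   The scalar factors of g1 and g2 then agree, as otherwise comparing the
   upper-right entries would make sqrt 2 times an integer an odd integer;
   hence x and z agree, and 0 <= y < z forces b = 0. *)

Lemma mulz_eq1 (a d : int) : a * d = 1 -> (a = 1 /\ d = 1) \/ (a = -1 /\ d = -1).
Proof.
move=> ad; have /eqP := congr1 absz ad.
rewrite abszM muln_eq1 => /andP[/eqP a1 /eqP d1].
have [[] aE [] dE] : (a = 1 \/ a = -1) /\ (d = 1 \/ d = -1) by lia.
all: rewrite aE dE in ad *; by [left | right | ].
Qed.

Section Mx2.
Context {R : realType}.
Implicit Types (a b c d : R) (A B : 'M[R]_2).

Lemma mx2_inj a b c d a' b' c' d' : mx2 a b c d = mx2 a' b' c' d' ->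
  [/\ a = a', b = b', c = c' & d = d'].
Proof.
move=> E; split;
[ move: (congr1 (fun M : 'M[R]_2 => M 0 0) E)
| move: (congr1 (fun M : 'M[R]_2 => M 0 1) E)
| move: (congr1 (fun M : 'M[R]_2 => M 1 0) E)
| move: (congr1 (fun M : 'M[R]_2 => M 1 1) E)]; by rewrite /mx2 !mxE.
Qed.

Lemma mx2_00 a b c d : mx2 a b c d 0 0 = a.
Proof. by rewrite mxE. Qed.

Lemma mx2_10 a b c d : mx2 a b c d 1 0 = c.
Proof. by rewrite mxE. Qed.

Lemma mx2_mul a b c d a' b' c' d' :
  mx2 a b c d *m mx2 a' b' c' d' =
  mx2 (a * a' + b * c') (a * b' + b * d') (c * a' + d * c') (c * b' + d * d').
Proof.
apply/matrixP => i j; rewrite !mxE !big_ord_recr big_ord0 /= !mxE /= add0r.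
by case: i => [[|[|?]] ?] //; case: j => [[|[|?]] ?].
Qed.

Lemma mulmx_col0_triangular A B i : B 1 0 = 0 -> (A *m B) i 0 = A i 0 * B 0 0.
Proof.
move=> B10; rewrite mxE big_ord_recl big_ord1 (_ : lift ord0 ord0 = 1).
  by rewrite B10 mulr0 addr0.
exact: val_inj.
Qed.

Lemma mx2_scale k a b c d : k *: mx2 a b c d = mx2 (k * a) (k * b) (k * c) (k * d).
Proof.
apply/matrixP => i j; rewrite !mxE.
by case: i => [[|[|?]] ?] //; case: j => [[|[|?]] ?].
Qed.

Lemma mx2_opp a b c d : - mx2 a b c d = mx2 (- a) (- b) (- c) (- d).
Proof.
apply/matrixP => i j; rewrite !mxE.
by case: i => [[|[|?]] ?] //; case: j => [[|[|?]] ?].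
Qed.

Lemma mx2_1 : (1%:M : 'M[R]_2) = mx2 1 0 0 1.
Proof.
apply/matrixP => i j; rewrite !mxE.
by case: i => [[|[|?]] ?] //; case: j => [[|[|?]] ?].
Qed.

Lemma mx2_inv a b c d : a * d - b * c = 1 ->
  invmx (mx2 a b c d) = mx2 d (- b) (- c) a.
Proof.
move=> det1.
have E : mx2 a b c d *m mx2 d (- b) (- c) a = 1%:M.
  by rewrite mx2_mul mx2_1 -det1; congr mx2; ring.
have [U _] := mulmx1_unit E.
by rewrite -[RHS]mul1mx -(mulVmx U) -mulmxA E mulmx1.
Qed.

End Mx2.

Section Gamma0_2_plus.
Context {R : realType}.
Local Notation isqrt2 := ((Num.sqrt (2 : R))^-1).
Implicit Types h : 'M[R]_2.

Lemma sqrt2_neq0 : Num.sqrt (2 : R) != 0.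
Proof. by rewrite gt_eqF // sqrtr_gt0 ltr0n. Qed.

Lemma sqrt2_sqr : Num.sqrt (2 : R) * Num.sqrt 2 = 2.
Proof. by rewrite -expr2 sqr_sqrtr // ler0n. Qed.

Lemma sqrt2_int_neq_odd (n N : int) : ~~ (2 %| N)%Z ->
  Num.sqrt (2 : R) * n%:~R != N%:~R.
Proof.
apply: contraNneq => E.
have : ((2 * (n * n))%:~R : R) = (N * N)%:~R.
  by rewrite !intrM -E mulrACA sqrt2_sqr.
by move/intr_inj; nia.
Qed.

Definition gamma0_2_mx (h : 'M[R]_2) : Prop := exists a b c d : int,
  h = mx2 a%:~R b%:~R (2 * c)%:~R d%:~R /\ a * d - b * (2 * c) = 1.

Definition w2_coset_mx (h : 'M[R]_2) : Prop := exists a b c d : int,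
  h = isqrt2 *: mx2 (2 * a)%:~R b%:~R (2 * c)%:~R (2 * d)%:~R /\
  2 * a * d - b * c = 1.

Definition gamma0_2_plus_mx (h : 'M[R]_2) : Prop :=
  gamma0_2_mx h \/ w2_coset_mx h.

Lemma gamma0_2_plus_mxM h1 h2 :
  gamma0_2_plus_mx h1 -> gamma0_2_plus_mx h2 -> gamma0_2_plus_mx (h1 *m h2).
Proof.
case=> [[a [b [c [d [-> det1]]]]] | [a [b [c [d [-> det1]]]]]]
  [[a' [b' [c' [d' [-> det2]]]]] | [a' [b' [c' [d' [-> det2]]]]]].
- left; exists (a * a' + b * (2 * c')), (a * b' + b * d'),
    (c * a' + d * c'), (2 * c * b' + d * d'); split.
    by rewrite mx2_mul; congr mx2; ring.
  by have := congr2 *%R det1 det2; rewrite mulr1 => E; rewrite -[RHS]E; ring.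
- right; exists (a * a' + b * c'), (a * b' + 2 * b * d'),
    (2 * c * a' + d * c'), (c * b' + d * d'); split.
    by rewrite -scalemxAr !mx2_mul; congr (_ *: mx2 _ _ _ _); ring.
  by have := congr2 *%R det1 det2; rewrite mulr1 => E; rewrite -[RHS]E; ring.
- right; exists (a * a' + b * c'), (2 * a * b' + b * d'),
    (c * a' + 2 * d * c'), (c * b' + d * d'); split.
    by rewrite -scalemxAl !mx2_mul; congr (_ *: mx2 _ _ _ _); ring.
  by have := congr2 *%R det1 det2; rewrite mulr1 => E; rewrite -[RHS]E; ring.
- left; exists (2 * a * a' + b * c'), (a * b' + b * d'),
    (c * a' + d * c'), (c * b' + 2 * d * d'); split.
    rewrite -scalemxAl -scalemxAr scalerA -invfM sqrt2_sqr mx2_mul mx2_scale.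
    by congr mx2; field.
  by have := congr2 *%R det1 det2; rewrite mulr1 => E; rewrite -[RHS]E; ring.
Qed.

Lemma isqrt2_sqr : isqrt2 * isqrt2 = 2^-1.
Proof. by rewrite -invfM sqrt2_sqr. Qed.

Lemma gamma0_2_plus_mxV h : gamma0_2_plus_mx h -> gamma0_2_plus_mx (invmx h).
Proof.
case=> [[a [b [c [d [-> det1]]]]] | [a [b [c [d [-> det1]]]]]].
- left; exists d, (- b), (- c), a; split; last by rewrite -[RHS]det1; ring.
  rewrite mx2_inv; first by congr mx2; ring.
  by rewrite -!intrM -intrB det1.
- right; exists d, (- b), (- c), a; split; last by rewrite -[RHS]det1; ring.
  rewrite mx2_scale mx2_inv; first by rewrite mx2_scale; congr mx2; ring.
  transitivity ((2 * a * d - b * c)%:~R : R); last by rewrite det1.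
  by rewrite [X in X - _]mulrACA [X in _ - X]mulrACA isqrt2_sqr; field.
Qed.

Lemma gamma0_2_plus_mx_w2 : gamma0_2_plus_mx w2.
Proof. by right; exists 0, (-1), 1, 0. Qed.

Lemma gamma0_2_plus_mx_Gamma0_2 h : Gamma0_2 h -> gamma0_2_plus_mx h.
Proof.
case=> [a [b [c [d [-> [det1 /dvdzP [q cE]]]]]]].
by left; exists a, b, q, d; rewrite cE (mulrC q) in det1 *.
Qed.

Lemma Gamma0_2_plus_explicit h : Gamma0_2_plus h -> gamma0_2_plus_mx h.
Proof.
elim=> {h} [h Gh | | h1 h2 _ G1 _ G2 | h _ Gh].
- exact: gamma0_2_plus_mx_Gamma0_2.
- exact: gamma0_2_plus_mx_w2.
- exact: gamma0_2_plus_mxM.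
- exact: gamma0_2_plus_mxV.
Qed.

Lemma Gamma0_2_plus_unipotent h : Gamma0_2_plus h -> h 1 0 = 0 -> 0 < h 0 0 ->
  exists b : int, h = mx2 1 b%:~R 0 1.
Proof.
move=> /Gamma0_2_plus_explicit
  [[a [b [c [d [-> det1]]]]] | [a [b [c [d [-> det1]]]]]];
  rewrite ?mx2_scale mx2_10 mx2_00.
- move=> /eqP; rewrite intr_eq0 => /eqP c0 a_gt0; rewrite c0 in det1 *.
  have [[-> ->]|[aN _]] := @mulz_eq1 a d ltac:(lia); first by exists b.
  by move: a_gt0; rewrite aN ltr0z.
- move=> /eqP; rewrite mulf_eq0 invr_eq0 (negbTE sqrt2_neq0) intr_eq0 => /eqP c0 _.
  have {}c0 : c = 0 by lia.
  by rewrite c0 mulr0 subr0 in det1; lia.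
Qed.

Lemma right_coset_mul g1 g2 : right_coset g2 g1 ->
  exists h, Gamma0_2_plus h /\ g1 = h *m g2.
Proof.
have minus1 : Gamma0_2_plus (- 1%:M : 'M[R]_2).
  by apply: G2p_base; exists (-1), 0, 0, (-1); rewrite mx2_1 mx2_opp oppr0.
case=> h [Gh [->|->]]; first by exists h.
by exists (- 1%:M *m h); split; [exact: G2p_mul | rewrite !mulNmx mul1mx].
Qed.

End Gamma0_2_plus.

Section Scaled_hermite.
Context {R : realType}.
Local Notation isqrt2 := ((Num.sqrt (2 : R))^-1).
Implicit Types g : 'M[R]_2.

Definition scaled_hermite g : Prop := exists (k : R) (x y z : int),
  g = k *: mx2 x%:~R y%:~R 0 z%:~R /\ 0 < x /\ 0 <= y < z /\
  (k = 1 \/ [/\ k = isqrt2, ~~ (2 %| y)%Z & (2 %| z)%Z]).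

Lemma Mset_scaled_hermite m g : Mset m g -> scaled_hermite g.
Proof.
have int_case x y z : upper_cond m x y z ->
    scaled_hermite (mx2 x%:~R y%:~R 0 z%:~R).
  by case=> x_gt0 [_ [y_bnd _]]; exists 1, x, y, z; rewrite scale1r; auto.
case=> [|[]] [x [y [z [U [_ gE]]]]]; try by case: gE => _ ->; apply: int_case.
case: gE U => x_even [z_even ->] [x_gt0 [_ [y_bnd gcd1]]].
have dvdz2 n : ~~ odd `|n|%N -> (2 %| n)%Z by rewrite dvdzE dvdn2.
move/dvdz2: x_even => x_even; move/dvdz2: z_even => z_even.
exists isqrt2, x, y, z; do 3 split => //; right; split => //.
apply/negP => y_even.
have : (2 %| gcdz x (gcdz y z))%Z by rewrite !dvdz_gcd x_even y_even z_even.
by rewrite gcd1.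
Qed.

Lemma scaled_hermite_col0 g : scaled_hermite g -> g 1 0 = 0 /\ 0 < g 0 0.
Proof.
case=> k [x [y [z [-> [x_gt0 [_ kE]]]]]].
rewrite mx2_scale mx2_10 mx2_00 mulr0; split => //.
rewrite pmulr_lgt0 ?ltr0z //.
by case: kE => [->|[-> _ _]]; rewrite ?ltr01 ?invr_gt0 ?sqrtr_gt0 ?ltr0n.
Qed.

Lemma scaled_hermite_coset g1 g2 : scaled_hermite g1 -> scaled_hermite g2 ->
  right_coset g2 g1 -> exists b : int, g1 = mx2 1 b%:~R 0 1 *m g2.
Proof.
move=> /scaled_hermite_col0 [g1_10 g1_00] /scaled_hermite_col0 [g2_10 g2_00].
case/right_coset_mul=> h [Gh g1E]; subst g1.
rewrite !mulmx_col0_triangular // in g1_10 g1_00.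
have h10 : h 1 0 = 0.
  by move: g1_10 => /eqP; rewrite mulf_eq0 (gt_eqF g2_00) orbF => /eqP.
have h00 : 0 < h 0 0 by rewrite pmulr_lgt0 in g1_00.
by have [b ->] := Gamma0_2_plus_unipotent Gh h10 h00; exists b.
Qed.

Lemma scaled_hermite_translate (b : int) g1 g2 :
  scaled_hermite g1 -> scaled_hermite g2 -> g1 = mx2 1 b%:~R 0 1 *m g2 -> g1 = g2.
Proof.
move=> [k1 [x1 [y1 [z1 [-> [x1_gt0 [y1_bnd k1E]]]]]]].
move=> [k2 [x2 [y2 [z2 [-> [x2_gt0 [y2_bnd k2E]]]]]]].
rewrite -scalemxAr mx2_mul !mx2_scale => /mx2_inj[ex ey _ ez].
rewrite !(mul1r, mul0r, mulr0, addr0, add0r) in ex ey ez.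
have k12 : k1 = k2.
  move: ey; case: k1E k2E => [->|[-> y1_odd _]] [->|[-> y2_odd z2_even]] //.
  - rewrite mul1r => ey; have := @sqrt2_int_neq_odd R y1 (y2 + b * z2) ltac:(nia).
    by rewrite ey mulVKf ?sqrt2_neq0 // intrD intrM eqxx.
  - rewrite mul1r => ey; have := @sqrt2_int_neq_odd R (y2 + b * z2) y1 y1_odd.
    by rewrite intrD intrM -ey mulVKf ?sqrt2_neq0 // eqxx.
have k2_neq0 : k2 != 0.
  by case: k2E => [->|[-> _ _]]; rewrite ?oner_eq0 ?invr_eq0 ?sqrt2_neq0.
rewrite -{}k12 in ex ey ez k2_neq0 *.
move/(mulfI k2_neq0)/intr_inj: ex => ->.
move/(mulfI k2_neq0)/intr_inj: ez => z12.
move: ey; rewrite -intrM -intrD => /(mulfI k2_neq0)/intr_inj y12.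
have b0 : b = 0 by nia.
by rewrite z12 y12 b0 mul0r addr0.
Qed.

End Scaled_hermite.

Theorem lemma2p2 (R : realType) (m : nat) (m_pos : (0 < m)%N) (m_even : ~~ odd m)
  (g1 g2 : 'M[R]_2) :
  Mset m g1 -> Mset m g2 -> right_coset g1 = right_coset g2 -> g1 = g2.
Proof.
move=> /Mset_scaled_hermite g1H /Mset_scaled_hermite g2H cosetE.
have g1_in : right_coset g2 g1.
  rewrite -cosetE; exists 1%:M; split; last by left; rewrite mul1mx.
  by apply: G2p_base; exists 1, 0, 0, 1; rewrite mx2_1.
have [b g1E] := scaled_hermite_coset g1H g2H g1_in.
exact: scaled_hermite_translate g1H g2H g1E.
Qed.
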